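(* Let $X$ be a compact locale with frame presentation $\mathcal{O}X=\langle G\mid R\rangle$ and quotient frame homomorphism $\overline{q}\colon\mathcal{O}(\Sigma^G)\to\mathcal{O}X$. Let $\mathcal{C}$ be the set of those finite sets $S$ of finite subsets of $G$ satisfying $\bigvee_{F\in S}\bigwedge_{g\in F}g=1$ in $\mathcal{O}X$. Then the open $\bigvee_{S\in\mathcal{C}}\bigwedge_{F\in S}{\boxtimes}F$ of the machine space $\Sigma^{\Sigma^G}$ (i.e. the Scott-open subset $\bigcup_{S\in\mathcal{C}}\bigcap_{F\in S}{\boxtimes}F$ of $\mathcal{O}(\Sigma^G)$) consists precisely of the machines $m\in\mathcal{O}(\Sigma^G)$ that cover $X$, i.e. those with $\overline{q}(m)=1$.
   Context: Frames are complete lattices with finite meets distributing over arbitrary joins; a locale $X$ is a frame $\mathcal{O}X$. A locale is compact if every cover $\bigvee_{i\in I}u_i=1$ has a finite subcover. For a set $G$, $\mathcal{O}(\Sigma^G)$ is the free frame on $G$ (elements, called machines, are formal joins of finite formal meets of generators), and the machine space $\Sigma^{\Sigma^G}$ is the locale given by the Scott topology on $\mathcal{O}(\Sigma^G)$. A presentation $\mathcal{O}X=\langle G\mid R\rangle$ means $\mathcal{O}X$ is the quotient of the free frame on $G$ by the congruence generated by $R$, with quotient map $\overline{q}$. For $U\subseteq G$, ${\boxtimes}U=\{m\in\mathcal{O}(\Sigma^G)\mid \exists\text{ finite }J\subseteq U\text{ with }\bigwedge_{g\in J}g\le m\}$, a Scott-open set. *)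

From HB Require Import structures.
From mathcomp Require Import all_boot.
From mathcomp Require Import boolp classical_sets cardinality.
Set Implicit Arguments. Unset Strict Implicit. Unset Printing Implicit Defensive.
Local Open Scope classical_set_scope.

Record Frame := Build_Frame {
  fcar :> Type;
  fle : fcar -> fcar -> Prop;
  fsup : set fcar -> fcar;
  finf : set fcar -> fcar;
  fle_refl : forall x, fle x x;
  fle_trans : forall x y z, fle x y -> fle y z -> fle x z;
  fle_antisym : forall x y, fle x y -> fle y x -> x = y;
  fsup_ub : forall S x, S x -> fle x (fsup S);
  fsup_least : forall S y, (forall x, S x -> fle x y) -> fle (fsup S) y;
  finf_lb : forall S x, S x -> fle (finf S) x;
  finf_greatest : forall S y, (forall x, S x -> fle y x) -> fle y (finf S);
  fdistr : forall a S,
    finf [set a; fsup S] = fsup [set finf [set a; s] | s in S]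
}.

Arguments fle {f}.
Arguments fsup {f}.
Arguments finf {f}.

Definition fmeet (X : Frame) (a b : X) : X := finf [set a; b].
Definition ftop (X : Frame) : X := finf (@set0 X).

Definition frame_hom (X Y : Frame) (h : X -> Y) : Prop :=
  (forall a b, h (fmeet a b) = fmeet (h a) (h b)) /\
  h (ftop X) = ftop Y /\
  (forall S : set X, h (fsup S) = fsup (h @` S)).

Definition is_free_frame (G : Type) (F0 : Frame) (eta : G -> F0) : Prop :=
  forall (Y : Frame) (f : G -> Y),
    exists h : F0 -> Y,
      (frame_hom h /\ forall g, h (eta g) = f g) /\
      forall h' : F0 -> Y, frame_hom h' -> (forall g, h' (eta g) = f g) ->
        forall x, h' x = h x.

Definition frame_congruence (F0 : Frame) (th : F0 -> F0 -> Prop) : Prop :=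
  (forall a, th a a) /\
  (forall a b, th a b -> th b a) /\
  (forall a b c, th a b -> th b c -> th a c) /\
  (forall a a' b b', th a b -> th a' b' -> th (fmeet a a') (fmeet b b')) /\
  (forall (I : Type) (a b : I -> F0), (forall i, th (a i) (b i)) ->
     th (fsup (range a)) (fsup (range b))).

Definition gen_congruence (F0 : Frame) (R : F0 -> F0 -> Prop) (a b : F0) : Prop :=
  forall th, frame_congruence th -> (forall u v, R u v -> th u v) -> th a b.

Definition compact_frame (X : Frame) : Prop :=
  forall (I : Type) (u : I -> X), fsup (range u) = ftop X ->
    exists J : set I, finite_set J /\ fsup (u @` J) = ftop X.

Definition boxtimes (G : Type) (F0 : Frame) (eta : G -> F0) (U : set G) : set F0 :=
  [set m | exists J : set G, finite_set J /\ J `<=` U /\ fle (finf (eta @` J)) m].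

From mathcomp Require Import all_boot.
From mathcomp Require Import boolp classical_sets cardinality.
Set Implicit Arguments. Unset Strict Implicit.
Local Open Scope classical_set_scope.

(* In a free frame every element is the join of the finite meets of generators
   below it: the elements with this property form a subframe containing the
   generators, which must then be everything.  So if [q m = 1], the images of
   these finite meets cover [X], compactness extracts a finite subcover [S],
   and [m] lies in each [boxtimes F], F in S.  Conversely a machine in every
   [boxtimes F] of a cover [S] lies above each meet [/\ F], hence [q m = 1]. *)

Lemma finite_set_ind (T : Type) (P : set T -> Prop) :
  P set0 -> (forall x A, finite_set A -> P A -> P (x |` A)) ->
  forall A, finite_set A -> P A.
Proof.
elim/Pchoice: T => T in P *.
move=> P0 PU A /finite_seqP [s ->].
elim: s => [|x s IH]; first by rewrite set_nil.
have -> : [set` (x :: s)] = x |` [set` s].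
  by apply/seteqP; split=> y /=; rewrite inE;
    [move=> /orP [/eqP ->|h]; [left|right] | move=> [->|h]; apply/orP; [left|right]].
by apply: PU => //; apply: finite_seq.
Qed.

Section FrameTheory.
Context {F : Frame}.
Implicit Types (a b c : F) (A B : set F).

Lemma fmeet_lel a b : fle (fmeet a b) a.
Proof. by apply: finf_lb; left. Qed.

Lemma fmeet_ler a b : fle (fmeet a b) b.
Proof. by apply: finf_lb; right. Qed.

Lemma fmeet_glb a b c : fle c a -> fle c b -> fle c (fmeet a b).
Proof. by move=> ca cb; apply: finf_greatest => x [->|->]. Qed.

Lemma fmeet_l a b : fle a b -> fmeet a b = a.
Proof.
move=> ab; apply: fle_antisym; first exact: fmeet_lel.
by apply: fmeet_glb => //; apply: fle_refl.
Qed.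

Lemma fmeetC a b : fmeet a b = fmeet b a.
Proof. by rewrite /fmeet setUC. Qed.

Lemma fle_top a : fle a (ftop F).
Proof. exact: finf_greatest. Qed.

Lemma finf_sub A B : A `<=` B -> fle (finf B) (finf A).
Proof. by move=> AB; apply: finf_greatest => x /AB; apply: finf_lb. Qed.

Lemma fsup_sub A B : A `<=` B -> fle (fsup A) (fsup B).
Proof. by move=> AB; apply: fsup_least => x /AB; apply: fsup_ub. Qed.

Lemma finf_set1 a : finf [set a] = a.
Proof.
by apply: fle_antisym; [apply: finf_lb | apply: finf_greatest => _ ->; apply: fle_refl].
Qed.

Lemma finf_setU A B : finf (A `|` B) = fmeet (finf A) (finf B).
Proof.
apply: fle_antisym.
  by apply: fmeet_glb; apply: finf_sub => x Ax; [left|right].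
apply: finf_greatest => x [Ax|Bx].
  by apply: fle_trans (fmeet_lel _ _) _; apply: finf_lb.
by apply: fle_trans (fmeet_ler _ _) _; apply: finf_lb.
Qed.

Lemma finf_setU1 a A : finf (a |` A) = fmeet a (finf A).
Proof. by rewrite finf_setU finf_set1. Qed.

Lemma fmeet_fsup_le A B :
  fle (fmeet (fsup A) (fsup B)) (fsup [set fmeet a b | a in A & b in B]).
Proof.
rewrite {1}/fmeet fdistr; apply: fsup_least => _ [b Bb <-].
rewrite -/(fmeet _ _) (fmeetC _ b) {1}/fmeet fdistr.
apply: fsup_least => _ [a Aa <-]; rewrite -/(fmeet _ _) fmeetC.
by apply: fsup_ub; exists a => //; exists b.
Qed.

End FrameTheory.

Section FrameHom.
Variables (X Y : Frame) (h : X -> Y).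
Hypothesis hom_h : frame_hom h.

Lemma frame_hom_le a b : fle a b -> fle (h a) (h b).
Proof. by case: hom_h => hm _ ab; rewrite -(fmeet_l ab) hm; apply: fmeet_ler. Qed.

Lemma frame_hom_finf A : finite_set A -> h (finf A) = finf (h @` A).
Proof.
move: A; apply: finite_set_ind; first by rewrite image_set0; case: hom_h => _ [].
move=> x A _ IH; rewrite finf_setU1 image_setU image_set1 finf_setU1.
by case: hom_h => hm _; rewrite hm IH.
Qed.

End FrameHom.

Lemma frame_hom_id (X : Frame) : frame_hom (@id X).
Proof. by split=> //; split=> // S; rewrite image_id. Qed.

Lemma frame_hom_comp (X Y Z : Frame) (f : X -> Y) (g : Y -> Z) :
  frame_hom f -> frame_hom g -> frame_hom (g \o f).
Proof.
move=> [f1 [f2 f3]] [g1 [g2 g3]]; split; first by move=> a b /=; rewrite f1 g1.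
split; first by rewrite /= f2 g2.
by move=> S /=; rewrite f3 g3 image_comp.
Qed.

Section Subframe.
Variables (F : Frame) (P : set F).
Hypotheses (P_fsup : forall S, S `<=` P -> P (fsup S))
  (P_fmeet : forall a b, P a -> P b -> P (fmeet a b)) (P_top : P (ftop F)).

Definition sub_car := {x : F | P x}.

Definition sub_le (a b : sub_car) := fle (sval a) (sval b).

Lemma image_sval_sub (S : set sub_car) : sval @` S `<=` P.
Proof. by move=> _ [s _ <-]; apply: proj2_sig. Qed.

Definition sub_sup (S : set sub_car) : sub_car :=
  exist _ (fsup (sval @` S)) (P_fsup (@image_sval_sub S)).

(* Infima are joins of lower bounds taken inside [P]: the infimum of [F] need
   not lie in [P]. *)
Definition sub_lbs (S : set sub_car) : set F :=
  [set y | P y /\ forall s, S s -> fle y (sval s)].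

Lemma sub_lbs_sub S : sub_lbs S `<=` P.
Proof. by move=> y []. Qed.

Definition sub_inf (S : set sub_car) : sub_car :=
  exist _ (fsup (sub_lbs S)) (P_fsup (@sub_lbs_sub S)).

Lemma sub_eq (a b : sub_car) : sval a = sval b -> a = b.
Proof. by case: a b => [a pa] [b pb] /= e; subst b; congr exist; apply: Prop_irrelevance. Qed.

Lemma sub_inf2 (a b : sub_car) : sval (sub_inf [set a; b]) = fmeet (sval a) (sval b).
Proof.
apply: fle_antisym => /=.
  by apply: fsup_least => y [_ H]; apply: fmeet_glb; apply: H; [left|right].
apply: fsup_ub; split; first by apply: P_fmeet; apply: proj2_sig.
by move=> s [->|->]; [apply: fmeet_lel | apply: fmeet_ler].
Qed.

Lemma sub_distr a S :
  sub_inf [set a; sub_sup S] = sub_sup [set sub_inf [set a; s] | s in S].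
Proof.
apply: sub_eq; rewrite sub_inf2 /= /fmeet fdistr; congr fsup.
apply/seteqP; split=> _ [_ [s Ss <-] <-].
  by exists (sub_inf [set a; s]); [exists s | rewrite sub_inf2].
by exists (sval s); [exists s | rewrite sub_inf2].
Qed.

Definition subframe : Frame.
refine (@Build_Frame sub_car sub_le sub_sup sub_inf _ _ _ _ _ _ _ sub_distr).
- by move=> x; apply: fle_refl.
- by move=> x y z; apply: fle_trans.
- by move=> x y xy yx; apply: sub_eq; apply: fle_antisym.
- by move=> S x Sx; apply: fsup_ub; exists x.
- by move=> S y H; apply: fsup_least => _ [x Sx <-]; apply: H.
- by move=> S x Sx; apply: fsup_least => y [_]; apply.
- by move=> S y H; apply: fsup_ub; split; [apply: proj2_sig|].
Defined.

Lemma frame_hom_sval : frame_hom (fun x : subframe => sval x).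
Proof.
split; first exact: sub_inf2.
split=> //=; apply: fle_antisym; first exact: fle_top.
by apply: fsup_ub; split.
Qed.

End Subframe.

Lemma free_frame_ind (G : Type) (F0 : Frame) (eta : G -> F0) (P : set F0) :
  is_free_frame eta ->
  (forall S, S `<=` P -> P (fsup S)) ->
  (forall a b, P a -> P b -> P (fmeet a b)) -> P (ftop F0) ->
  (forall g, P (eta g)) -> forall x, P x.
Proof.
move=> free_eta P_fsup P_fmeet P_top P_eta x.
have [h [[hom_h h_eta] _]] :=
  free_eta (subframe P_fsup P_fmeet) (fun g => exist _ (eta g) (P_eta g)).
have [k [_ k_uniq]] := free_eta F0 eta.
have -> : x = sval (h x).
  have hom_sval_h := frame_hom_comp hom_h (frame_hom_sval P_fsup P_fmeet P_top).
  rewrite [LHS](k_uniq _ (frame_hom_id F0)) // -(k_uniq _ hom_sval_h) //.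
  by move=> g /=; rewrite h_eta.
exact: proj2_sig.
Qed.

Section NormalForm.
Variables (G : Type) (F0 : Frame) (eta : G -> F0).

Definition basic (J : set G) : F0 := finf (eta @` J).

Definition basic_below (x : F0) : set (set G) :=
  [set J | finite_set J /\ fle (basic J) x].

Lemma basic_setU J J' : basic (J `|` J') = fmeet (basic J) (basic J').
Proof. by rewrite /basic image_setU finf_setU. Qed.

Lemma basic_subset J J' : J `<=` J' -> fle (basic J') (basic J).
Proof. by move=> JJ'; apply: finf_sub; apply: image_subset. Qed.

Lemma fsup_basic_below_le x : fle (fsup (basic @` basic_below x)) x.
Proof. by apply: fsup_least => _ [J [_ Jx] <-]. Qed.

Lemma fsup_basic_below : is_free_frame eta ->
  forall x, x = fsup (basic @` basic_below x).
Proof.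
move=> free_eta x; apply: fle_antisym; last exact: fsup_basic_below_le.
pose P y := fle y (fsup (basic @` basic_below y)).
have below_basic J : finite_set J -> P (basic J).
  by move=> finJ; apply: fsup_ub; exists J => //; split=> //; apply: fle_refl.
apply: (@free_frame_ind _ _ eta P free_eta) => [S PS|a b Pa Pb||g].
- apply: fsup_least => y Sy; apply: fle_trans (PS y Sy) _.
  apply/fsup_sub/image_subset => J [finJ Jy]; split=> //.
  by apply: fle_trans Jy _; apply: fsup_ub.
- apply: fle_trans (fmeet_glb (fle_trans (fmeet_lel a b) Pa)
                              (fle_trans (fmeet_ler a b) Pb)) _.
  apply: fle_trans (fmeet_fsup_le _ _) _.
  apply: fsup_least => _ [_ [J [finJ Ja] <-] [_ [J' [finJ' J'b] <-] <-]].
  apply: fsup_ub; exists (J `|` J'); last by rewrite basic_setU.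
  split; first by rewrite finite_setU.
  by rewrite basic_setU; apply: fmeet_glb;
    [apply: fle_trans (fmeet_lel _ _) Ja | apply: fle_trans (fmeet_ler _ _) J'b].
- by have := below_basic _ (finite_set0 G); rewrite /basic image_set0.
- by have := below_basic _ (finite_set1 g); rewrite /basic image_set1 finf_set1.
Qed.

Lemma boxtimes_le F m : boxtimes eta F m -> fle (basic F) m.
Proof. by move=> [J [_ [JF Jm]]]; apply: fle_trans Jm; apply: basic_subset. Qed.

Lemma le_boxtimes F m : finite_set F -> fle (basic F) m -> boxtimes eta F m.
Proof. by move=> finF Fm; exists F; split=> //; split. Qed.

End NormalForm.

Lemma compact_subcover (X : Frame) (T : Type) (f : T -> X) (A : set T) :
  compact_frame X -> fsup (f @` A) = ftop X ->
  exists B, [/\ finite_set B, B `<=` A & fsup (f @` B) = ftop X].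
Proof.
move=> cptX cover; pose u (i : {x | A x}) := f (sval i).
have [J [finJ Ju]] : exists J, finite_set J /\ fsup (u @` J) = ftop X.
  apply: cptX; rewrite -cover; congr fsup; apply/seteqP; split.
    by move=> _ [i _ <-]; exists (sval i) => //; apply: proj2_sig.
  by move=> _ [x Ax <-]; exists (exist _ x Ax).
exists (sval @` J); split; first exact: finite_image.
  by move=> _ [i _ <-]; apply: proj2_sig.
by rewrite image_comp; exact: Ju.
Qed.

Theorem corollary4p2
  (G : Type) (F0 : Frame) (eta : G -> F0) (Hfree : is_free_frame eta)
  (R : F0 -> F0 -> Prop) (X : Frame) (q : F0 -> X)
  (Hq : frame_hom q) (Hqsurj : forall x : X, exists m, q m = x)
  (Hker : forall a b, q a = q b <-> gen_congruence R a b)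
  (Hcpt : compact_frame X) :
  let C : set (set (set G)) :=
    [set S | finite_set S /\ (forall F, S F -> finite_set F) /\
             fsup [set finf ((fun g => q (eta g)) @` F) | F in S] = ftop X] in
  forall m : F0,
    (exists2 S, C S & forall F, S F -> boxtimes eta F m) <-> q m = ftop X.
Proof.
move=> C m.
have q_basic F : finite_set F -> finf ((fun g => q (eta g)) @` F) = q (basic eta F).
  by move=> finF; rewrite /basic (frame_hom_finf Hq (finite_image _ finF)) image_comp.
split=> [[S [_ [finS cover]] Sm] | qm].
  apply: fle_antisym; first exact: fle_top.
  rewrite -cover; apply: fsup_least => _ [F SF <-].
  rewrite q_basic; last exact: finS.
  by apply: (frame_hom_le Hq); apply: boxtimes_le; apply: Sm.
have cover : fsup ((q \o basic eta) @` basic_below eta m) = ftop X.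
  by rewrite -image_comp -(proj2 (proj2 Hq)) -(fsup_basic_below Hfree).
have [S [finS Sm Scover]] := compact_subcover Hcpt cover.
exists S; last by move=> F /Sm [finF Fm]; apply: le_boxtimes.
split=> //; split=> [F /Sm []//|]; rewrite -Scover; congr fsup.
by apply: eq_imagel => F /Sm [finF _]; apply: q_basic.
Qed.
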